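(* For all integers $m\ge1$, $K(2^m,4)\neq K(2^m,1,1)$. Moreover, if $m<14$ then $K(2^m,4)<K(2^m,1,1)$, and if $m\ge 14$ then $K(2^m,4)>K(2^m,1,1)$.
   Context: $2^m$ denotes the list $2,2,\ldots,2$ ($m$ entries). For a list $(c_1,\ldots,c_k)$ of positive integers with even sum and $n=\frac12(c_1+\cdots+c_k+2)$, $K(c_1,\ldots,c_k)$ is the number of Young tableaux of shape $(n-1,n-1)$ and content $(c_1,\ldots,c_k)$: two-rowed arrays of integers, each row of length $n-1$, weakly increasing along rows, strictly increasing down columns, with exactly $c_i$ occurrences of $i$ for each $i$ (this number is $0$ if no such tableau exists). *)

From mathcomp Require Import all_boot.
Set Implicit Arguments. Unset Strict Implicit. Unset Printing Implicit Defensive.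

(* A content c = (c_1,...,c_k) is a seq nat; the entry value i+1 is represented
   by the ordinal i : 'I_k, so c_(i+1) = nth 0 c i.  For even sum, n-1 = (sum c)/2. *)

Definition rowlen (c : seq nat) : nat := (sumn c)./2.

Definition is_tableau (c : seq nat)
  (t : (rowlen c).-tuple 'I_(size c) * (rowlen c).-tuple 'I_(size c)) : bool :=
  let: (r1, r2) := t in
  [&& sorted (fun a b : 'I_(size c) => (a <= b)%N) r1,
      sorted (fun a b : 'I_(size c) => (a <= b)%N) r2,
      [forall j : 'I_(rowlen c), (tnth r1 j < tnth r2 j)%N] &
      [forall i : 'I_(size c), count_mem i r1 + count_mem i r2 == nth 0 c i]].

Definition K (c : seq nat) : nat := #|[pred t | @is_tableau c t]|.

From Stdlib Require Import ZArith Lia.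
From mathcomp Require Import all_boot zify.
Set Implicit Arguments. Unset Strict Implicit. Unset Printing Implicit Defensive.

(* A tableau of shape (n-1,n-1) is determined by the numbers x_i of entries i
   in its second row, and column strictness becomes a ballot condition on the
   partial sums of the x_i.  For a content 2^m followed by a short tail, the
   difference of the row lengths after the 2-columns performs a walk on the
   even integers with steps +2, 0, -2 (only +2 allowed at 0), so K(2^m,4) and
   K(2^m,1,1) count such walks ending at 4, resp. at 0 or 2.  Comparing them
   with Motzkin paths shows that their difference d(m) satisfies
   d(m+2) = d(m) + 2 T(m,3) - T(m,1) - T(m,5) for the trinomial coefficients
   T(m,j).  The recurrence of T(m,j) in j expresses this increment as a
   combination of T(m,0) and T(m,1) with coefficients positive for m >= 18;
   the finitely many remaining values are computed. *)

Lemma count_ltnS (s : seq nat) n :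
  count (fun z => z < n.+1) s = count (fun z => z < n) s + count_mem n s.
Proof. by elim: s => //= z s ->; rewrite ltnS; case: ltngtP; lia. Qed.

Lemma sumn_count_mem_iota (s : seq nat) n :
  sumn [seq count_mem i s | i <- iota 0 n] = count (fun z => z < n) s.
Proof.
elim: n => [|n IH]; first by rewrite (@eq_count _ _ pred0) ?count_pred0.
by rewrite -addn1 iotaD map_cat sumn_cat IH /= addn0 addn1 count_ltnS.
Qed.

Lemma count_ltn_sorted (s : seq nat) j v : sorted leq s -> j < size s ->
  v <= nth 0 s j -> count (fun z => z < v) s <= j.
Proof.
elim: s j => [|z s IH] j //= Hp; have Hs := path_sorted Hp.
case: j => [|j] /= Hj Hv; last by have := IH j Hs Hj Hv; case: (z < v) => /=; lia.
have : ~~ has (fun y => y < v) s.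
  apply/hasPn => y /(allP (order_path_min leq_trans Hp)) Hzy.
  by rewrite -leqNgt (leq_trans Hv).
by rewrite has_count -leqNgt leqn0 => /eqP ->; rewrite ltnNge Hv.
Qed.

Lemma count_leq_nth_sorted (s : seq nat) j : sorted leq s -> j < size s ->
  j < count (fun z => z <= nth 0 s j) s.
Proof.
elim: s j => [|z s IH] j //= Hp; case: j => [|j] /= Hj; first by rewrite leqnn.
have Hz := allP (order_path_min leq_trans Hp) _ (mem_nth 0 Hj).
by rewrite Hz add1n ltnS IH // (path_sorted Hp).
Qed.

Lemma col_strict_iff_count (r1 r2 : seq nat) : sorted leq r1 -> sorted leq r2 ->
  size r1 = size r2 ->
  (forall j, j < size r1 -> nth 0 r1 j < nth 0 r2 j) <->
  (forall v, count (fun z => z <= v) r2 <= count (fun z => z < v) r1).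
Proof.
move=> S1 S2 Hs; split=> [|H j Hj].
  elim: r1 r2 S1 S2 Hs => [|z1 r1 IH] [|z2 r2] //= S1 S2 [Hs] H v.
  have := IH r2 (path_sorted S1) (path_sorted S2) Hs (fun j => H j.+1) v.
  have := H 0 isT; rewrite /=.
  by case: (leqP z2 v) => Hz; case: (ltnP z1 v) => Hz' //=; lia.
rewrite ltnNge; apply/negP => Hle.
have := count_ltn_sorted S1 Hj Hle.
have := count_leq_nth_sorted S2 (leq_trans Hj (eq_leq Hs)).
by have := H (nth 0 r2 j); lia.
Qed.

Fixpoint sorted_word (f : nat -> nat) (k : nat) : seq nat :=
  if k is k'.+1 then sorted_word f k' ++ nseq (f k') k' else [::].

Lemma sorted_word_ltn f k : all (fun z => z < k) (sorted_word f k).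
Proof.
elim: k => //= k IH; rewrite all_cat all_nseq ltnSn orbT andbT.
by apply: sub_all IH => z /ltnW.
Qed.

Lemma sorted_word_sorted f k : sorted leq (sorted_word f k).
Proof.
rewrite sorted_pairwise; last exact: leq_trans.
elim: k => //= k IH; rewrite pairwise_cat IH /=; apply/andP; split.
  apply/allrelP => x y /(allP (sorted_word_ltn f k)) Hx.
  by rewrite mem_nseq => /andP[_ /eqP ->]; apply: ltnW.
by elim: (f k) => //= n ->; rewrite all_nseq leqnn orbT.
Qed.

Lemma count_mem_sorted_word f k v :
  count_mem v (sorted_word f k) = if v < k then f v else 0.
Proof.
elim: k => [|k IH] //=; rewrite count_cat IH count_nseq /= ltnS.
by case: (ltngtP v k) => [H|H|->] /=; rewrite ?eqxx ?muln0 ?mul1n ?mul0n ?addn0.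
Qed.

Lemma sumn_take_count (s x : seq nat) n :
  n <= size x -> (forall i, i < size x -> count_mem i s = nth 0 x i) ->
  sumn (take n x) = count (fun z => z < n) s.
Proof.
move=> Hn H; rewrite -sumn_count_mem_iota -{1}(mkseq_nth 0 x) /mkseq.
rewrite -map_take take_iota (minn_idPl Hn).
congr sumn; apply/eq_in_map => i; rewrite mem_iota add0n => /andP[_ Hi].
by rewrite H // (leq_trans Hi Hn).
Qed.

(* [ballot c x a b L]: the second row contains x_i entries i (and the first row
   c_i - x_i), the rows having lengths a and b before the entries i are placed;
   [b + x_i <= a] is column strictness and L is the final row length. *)
Fixpoint ballot (c x : seq nat) (a b L : nat) : bool :=
  match c, x with
  | [::], [::] => (a == L) && (b == L)
  | ci :: c', xi :: x' =>
      [&& xi <= ci, b + xi <= a & ballot c' x' (a + (ci - xi)) (b + xi) L]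
  | _, _ => false
  end.

Fixpoint ballots (c : seq nat) (a b L : nat) : seq (seq nat) :=
  match c with
  | [::] => if (a == L) && (b == L) then [:: [::]] else [::]
  | ci :: c' => [seq x :: s | x <- [seq x <- iota 0 ci.+1 | b + x <= a],
                              s <- ballots c' (a + (ci - x)) (b + x) L]
  end.

Lemma mem_ballots c s a b L : (s \in ballots c a b L) = ballot c s a b L.
Proof.
elim: c s a b => [|ci c IH] s a b.
  by case: s => [|z s] /=; case: ifP => _; rewrite ?inE.
apply/allpairsPdep/idP => [[x [s' [+ Hs ->]]]|].
  by rewrite mem_filter mem_iota ltnS /= -IH Hs andbT andbC.
case: s => [|x s] // /and3P[Hx Hxa Hs]; exists x, s.
by rewrite mem_filter mem_iota ltnS Hxa Hx IH.
Qed.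

Lemma ballots_uniq c a b L : uniq (ballots c a b L).
Proof.
elim: c a b => [|ci c IH] a b; first by rewrite /=; case: ifP.
apply: allpairs_uniq_dep => [||[x s] [y t] _ _ /= [-> ->]] //.
exact/filter_uniq/iota_uniq.
Qed.

Lemma ballot_size c x a b L : ballot c x a b L ->
  size x = size c /\ forall i, nth 0 x i <= nth 0 c i.
Proof.
elim: c x a b => [|ci c IH] [|xi x] a b //= /and3P[Hxi _ /IH[-> Hle]].
by split=> // -[].
Qed.

Definition ballot_prefix (x y : seq nat) (a b : nat) :=
  forall v, v < size x -> b + sumn (take v.+1 x) <= a + sumn (take v y).

Lemma ballot_iff_prefix c x y a b L : size x = size c -> size y = size c ->
  (forall i, nth 0 x i + nth 0 y i = nth 0 c i) ->
  ballot c x a b L <-> [/\ ballot_prefix x y a b, a + sumn y = L & b + sumn x = L].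
Proof.
elim: c x y a b => [|ci c IH] [|xi x] [|yi y] a b //= Hx Hy Hc.
  rewrite !addn0; split=> [/andP[/eqP -> /eqP ->]|[_ -> ->]]; last by rewrite !eqxx.
  by split.
case: Hx Hy => Hx [Hy].
have Hci := Hc 0; rewrite /= in Hci; subst ci.
have IHc := IH x y (a + yi) (b + xi) Hx Hy (fun i => Hc i.+1).
rewrite addKn leq_addr /=; split=> [/andP[Hb /IHc[HP Ha Hb']]|[HP Ha Hb]].
  split; [|lia|lia] => -[|v] /= Hv; first by rewrite take0 !addn0.
  by rewrite !addnA HP.
apply/andP; split; first by have := HP 0 isT; rewrite /= take0 !addn0.
apply/IHc; split; [|lia|lia] => v Hv; have := HP v.+1 Hv; by rewrite /= !addnA.
Qed.

Section TableauBallot.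
Variable c : seq nat.
Local Notation k := (size c).
Local Notation L := (rowlen c).

Definition row_nat (r : L.-tuple 'I_k) : seq nat := [seq nat_of_ord i | i <- r].

Definition row2_mult (t : L.-tuple 'I_k * L.-tuple 'I_k) : seq nat :=
  [seq count_mem i (row_nat t.2) | i <- iota 0 k].

Lemma count_mem_row_nat (r : L.-tuple 'I_k) (i : 'I_k) :
  count_mem i r = count_mem (val i) (row_nat r).
Proof. by rewrite /row_nat count_map; apply: eq_count. Qed.

Lemma count_mem_row_nat_out (r : L.-tuple 'I_k) v : k <= v -> count_mem v (row_nat r) = 0.
Proof.
move=> Hv; apply/eqP; rewrite -leqn0 leqNgt -has_count /row_nat has_map.
by apply/hasPn => z _ /=; rewrite neq_ltn (leq_trans (ltn_ord z) Hv).
Qed.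

Lemma size_row_nat (r : L.-tuple 'I_k) : size (row_nat r) = L.
Proof. by rewrite size_map size_tuple. Qed.

Lemma count_ltn_row_nat (r : L.-tuple 'I_k) : count (fun z => z < k) (row_nat r) = L.
Proof.
rewrite /row_nat count_map (@eq_count _ _ predT) ?count_predT ?size_tuple // => z.
exact: ltn_ord.
Qed.

Lemma nth_row_nat (r : L.-tuple 'I_k) j (Hj : j < L) :
  nth 0 (row_nat r) j = tnth r (Ordinal Hj).
Proof.
pose x0 := tnth r (Ordinal Hj).
by rewrite /row_nat (nth_map x0) ?size_tuple // [in RHS](tnth_nth x0).
Qed.

Lemma sorted_row_nat (r : L.-tuple 'I_k) :
  sorted (fun a b : 'I_k => (a <= b)%N) r = sorted leq (row_nat r).
Proof. by rewrite /row_nat sorted_map. Qed.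

Lemma row_nat_inj (r r' : L.-tuple 'I_k) :
  sorted (fun a b : 'I_k => (a <= b)%N) r -> sorted (fun a b : 'I_k => (a <= b)%N) r' ->
  (forall i, i < k -> count_mem i (row_nat r) = count_mem i (row_nat r')) -> r = r'.
Proof.
rewrite !sorted_row_nat => S S' H.
suff E : row_nat r = row_nat r' by apply/val_inj/(inj_map val_inj).
apply: (sorted_eq leq_trans anti_leq S S'); apply/allP => v _; apply/eqP.
by case: (ltnP v k) => Hv; [apply: H | rewrite !count_mem_row_nat_out].
Qed.

Lemma row_nat_tuple (s : seq nat) : all (fun z => z < k) s -> size s = L ->
  {r : L.-tuple 'I_k | row_nat r = s}.
Proof.
move=> Hk Hs.
have Hsz : size (pmap (insub : nat -> option 'I_k) s) == L.
  by rewrite size_pmap_sub -Hs -[size s]count_predT; apply/eqP/eq_in_count => z /(allP Hk).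
exists (Tuple Hsz); rewrite /row_nat /= (pmap_filter (@insubK _ _ _)).
by apply/all_filterP; apply: sub_all Hk => z; rewrite /= isSome_insub.
Qed.

Lemma tableau_ballot t : is_tableau t -> ballot c (row2_mult t) 0 0 L.
Proof.
case: t => r1 r2 /and4P[S1 S2 /forallP Hcol /forallP Hcnt].
set x := row2_mult _; set y := [seq count_mem i (row_nat r1) | i <- iota 0 k].
have Hx : size x = k by rewrite size_map size_iota.
have Hy : size y = k by rewrite size_map size_iota.
have Cx i : i < size x -> count_mem i (row_nat r2) = nth 0 x i.
  by rewrite Hx => Hi; rewrite (nth_map 0) ?size_iota // nth_iota.
have Cy i : i < size y -> count_mem i (row_nat r1) = nth 0 y i.
  by rewrite Hy => Hi; rewrite (nth_map 0) ?size_iota // nth_iota.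
apply/(ballot_iff_prefix (y := y)) => // [i|].
  case: (ltnP i k) => Hi; last by rewrite !nth_default ?Hx ?Hy.
  rewrite -Cx ?Hx // -Cy ?Hy // addnC.
  by have /eqP := Hcnt (Ordinal Hi); rewrite !count_mem_row_nat.
have Hstrict v : count (fun z => z <= v) (row_nat r2) <= count (fun z => z < v) (row_nat r1).
  rewrite sorted_row_nat in S1; rewrite sorted_row_nat in S2.
  apply: (proj1 (col_strict_iff_count S1 S2 _)); rewrite ?size_row_nat // => j Hj.
  by rewrite !(nth_row_nat _ Hj); apply: Hcol.
rewrite !add0n; split.
- move=> v; rewrite Hx => Hv.
  rewrite (sumn_take_count _ Cx) ?Hx // (sumn_take_count _ Cy) ?Hy ?(ltnW Hv) //.
  by rewrite !add0n (@eq_count _ _ (fun z => z <= v)).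
- by rewrite -(take_size y) (sumn_take_count _ Cy) // Hy count_ltn_row_nat.
- by rewrite -(take_size x) (sumn_take_count _ Cx) // Hx count_ltn_row_nat.
Qed.

Lemma row2_mult_inj : {in [pred t | is_tableau t] &, injective row2_mult}.
Proof.
move=> [r1 r2] [r1' r2']; rewrite !inE.
move=> /and4P[S1 S2 _ /forallP Hc] /and4P[S1' S2' _ /forallP Hc'] E.
have C2 i : i < k -> count_mem i (row_nat r2) = count_mem i (row_nat r2').
  move=> Hi; have := congr1 (nth 0 ^~ i) E.
  by rewrite /row2_mult /= !(nth_map 0) ?size_iota // nth_iota.
have C1 i : i < k -> count_mem i (row_nat r1) = count_mem i (row_nat r1').
  move=> Hi; have /eqP := Hc (Ordinal Hi); have /eqP := Hc' (Ordinal Hi).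
  rewrite !count_mem_row_nat /= C2 // => <-; exact: addIn.
by rewrite (row_nat_inj S1 S1' C1) (row_nat_inj S2 S2' C2).
Qed.

Lemma sorted_word_tuple (m : seq nat) : size m = k -> sumn m = L ->
  {r : L.-tuple 'I_k | row_nat r = sorted_word (nth 0 m) k}.
Proof.
move=> Hm HL; apply: row_nat_tuple; first exact: sorted_word_ltn.
have C i : i < size m -> count_mem i (sorted_word (nth 0 m) k) = nth 0 m i.
  by rewrite Hm => Hi; rewrite count_mem_sorted_word Hi.
rewrite -HL -[m in sumn m]take_size (sumn_take_count _ C) // Hm -[size _]count_predT.
by apply/esym/eq_in_count => z /(allP (sorted_word_ltn _ _)).
Qed.

Lemma ballot_tableau x : ballot c x 0 0 L -> exists2 t, is_tableau t & row2_mult t = x.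
Proof.
move=> Hb; have [Hx Hle] := ballot_size Hb.
set y := [seq nth 0 c i - nth 0 x i | i <- iota 0 k].
have Hy : size y = k by rewrite size_map size_iota.
have Hxy i : nth 0 x i + nth 0 y i = nth 0 c i.
  case: (ltnP i k) => Hi; last by rewrite !nth_default ?Hx ?Hy.
  by rewrite (nth_map 0) ?size_iota // nth_iota // add0n subnKC ?Hle.
have [Hpre Hsy Hsx] := (ballot_iff_prefix 0 0 L Hx Hy Hxy).1 Hb.
have [r1 Hr1] := sorted_word_tuple Hy Hsy.
have [r2 Hr2] := sorted_word_tuple Hx Hsx.
have C1 i : i < size y -> count_mem i (row_nat r1) = nth 0 y i.
  by rewrite Hy Hr1 count_mem_sorted_word => ->.
have C2 i : i < size x -> count_mem i (row_nat r2) = nth 0 x i.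
  by rewrite Hx Hr2 count_mem_sorted_word => ->.
have S1 : sorted leq (row_nat r1) by rewrite Hr1 sorted_word_sorted.
have S2 : sorted leq (row_nat r2) by rewrite Hr2 sorted_word_sorted.
exists (r1, r2); last first.
  rewrite /row2_mult /= -[RHS](mkseq_nth 0 x) Hx; apply/eq_in_map => i.
  by rewrite mem_iota add0n => /andP[_ Hi]; apply: C2; rewrite Hx.
apply/and4P; split; rewrite ?sorted_row_nat //.
- apply/forallP => -[j Hj]; rewrite -!(nth_row_nat _ Hj).
  apply: (proj2 (col_strict_iff_count S1 S2 _)); rewrite ?size_row_nat // => v.
  case: (ltnP v k) => Hvk.
    rewrite (@eq_count _ _ (fun z => z < v.+1)) //.
    rewrite -(sumn_take_count _ C2) ?Hx // -(sumn_take_count _ C1) ?Hy ?(ltnW Hvk) //.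
    by have := Hpre v; rewrite Hx; apply.
  apply: (@leq_trans L); first by rewrite -(size_row_nat r2) count_size.
  by rewrite -(count_ltn_row_nat r1) sub_count // => z /= /leq_trans; apply.
- apply/forallP => i; have Hi := ltn_ord i.
  by rewrite !count_mem_row_nat C1 ?C2 ?Hx ?Hy // addnC Hxy.
Qed.

Lemma K_ballots : K c = size (ballots c 0 0 L).
Proof.
rewrite /K cardE -(size_map row2_mult); apply/perm_size/uniq_perm.
- rewrite map_inj_in_uniq ?enum_uniq // => t t' Ht Ht'.
  by apply: row2_mult_inj; rewrite -mem_enum.
- exact: ballots_uniq.
move=> s; rewrite mem_ballots; apply/mapP/idP => [[t Ht ->]|/ballot_tableau[t Ht <-]].
  by apply: tableau_ballot; rewrite mem_enum in Ht.
by exists t; rewrite ?mem_enum.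
Qed.

End TableauBallot.

Lemma size_ballots_cons ci c a b L : size (ballots (ci :: c) a b L) =
  \sum_(x <- iota 0 ci.+1 | b + x <= a) size (ballots c (a + (ci - x)) (b + x) L).
Proof. by rewrite size_allpairs_dep sumnE big_map big_filter. Qed.

Lemma size_ballots_last n a b L :
  size (ballots [:: n] a b L) = (a == L) && (b + n == L).
Proof.
rewrite size_ballots_cons big_mkcond (bigD1_seq n) ?mem_iota ?iota_uniq //=.
rewrite big1_seq ?addn0 => [|x /andP[/eqP Hxn]].
  by rewrite subnn addn0; case: eqP => [->|_]; case: eqP => [->|_]; rewrite ?leqnn ?if_same.
rewrite in_cons mem_iota => Hx; case: ifP => // Hle.
by case: eqP => Ha; case: eqP => Hb //=; lia.
Qed.

(* Walks of length m on the heights 0, 1, 2, ... starting at i, with steps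
   +1, 0, -1 where only +1 is allowed at height 0, each weighted by F of its
   final height.  A column with content 2 puts 0, 1 or 2 entries into the second
   row, moving the height (a - b)/2 by +1, 0 or -1. *)
Fixpoint walk_weight (m : nat) (F : nat -> nat) (i : nat) : nat :=
  if m is m'.+1 then
    walk_weight m' F i.+1 + (if i is i'.+1 then walk_weight m' F i + walk_weight m' F i' else 0)
  else F i.

Definition walk_count (m i h : nat) : nat := walk_weight m (fun j => j == h) i.

Lemma walk_weightD m F G i :
  walk_weight m (fun j => F j + G j) i = walk_weight m F i + walk_weight m G i.
Proof. by elim: m i => [|m IH] [|i] //=; rewrite !IH; lia. Qed.

Lemma walk_countS m i h : walk_count m.+1 i h =
  walk_count m i.+1 h + (if i is i'.+1 then walk_count m i h + walk_count m i' h else 0).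
Proof. by []. Qed.

Lemma walk_count_last0 m i : walk_count m.+1 i 0 = walk_count m i 1.
Proof.
elim: m i => [|m IH] i; first by case: i => [|[|i]].
by case: i => [|i]; rewrite walk_countS !IH [RHS]walk_countS.
Qed.

Lemma walk_count_lastS m i h :
  walk_count m.+1 i h.+1 = walk_count m i h + walk_count m i h.+1 + walk_count m i h.+2.
Proof.
elim: m i => [|m IH] i.
  by rewrite /walk_count /=; case: i => [|[|i]]; case: h => [|[|[|h]]] //=; lia.
by case: i => [|i]; rewrite walk_countS ![in LHS]IH !(walk_countS m); lia.
Qed.

Lemma size_ballots_nseq2_cat c F s L :
  (forall a b i, a = b + 2 * i -> size (ballots c a b L) = (b + i + s == L) * F i) ->
  forall m a b i, a = b + 2 * i ->
  size (ballots (nseq m 2 ++ c) a b L) = (b + i + m + s == L) * walk_weight m F i.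
Proof.
move=> Hc; elim=> [|m IH] a b i Ha; first by rewrite addn0; apply: Hc.
rewrite [nseq _ _ ++ _]/= size_ballots_cons (_ : iota 0 3 = [:: 0; 1; 2]) // !big_cons big_nil.
rewrite subn0 subnn (_ : 2 - 1 = 1) // !addn0 {}Ha leq_addr.
have E0 : b + 2 * i + 2 = b + 2 * i.+1 by lia.
rewrite (IH _ _ _ E0) /=; case: i E0 => [|i] _.
  have -> : (b + 1 <= b + 2 * 0) = false by lia.
  have -> : (b + 2 <= b + 2 * 0) = false by lia.
  by rewrite !addn0 addn1 !addSn addnS.
have -> : b + 1 <= b + 2 * i.+1 by lia.
have -> : b + 2 <= b + 2 * i.+1 by lia.
have E1 : b + 2 * i.+1 + 1 = b + 1 + 2 * i.+1 by lia.
have E2 : b + 2 * i.+1 = b + 2 + 2 * i by lia.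
by rewrite (IH _ _ _ E1) (IH _ _ _ E2) !addn1 !addn2 !addnS !addSn !mulnDr.
Qed.

Lemma rowlen_nseq2_cat m c : rowlen (nseq m 2 ++ c) = m + rowlen c.
Proof. by rewrite /rowlen sumn_cat sumn_nseq; lia. Qed.

Lemma K_nseq2_4 m : K (nseq m 2 ++ [:: 4]) = walk_count m 0 2.
Proof.
have Htail a b i : a = b + 2 * i ->
    size (ballots [:: 4] a b (m + 2)) = (b + i + 2 == m + 2) * (i == 2).
  by move=> ->; rewrite size_ballots_last; lia.
rewrite K_ballots rowlen_nseq2_cat (@size_ballots_nseq2_cat _ _ _ _ Htail m 0 0 0 erefl).
by rewrite !add0n eqxx mul1n.
Qed.

Lemma K_nseq2_11 m : K (nseq m 2 ++ [:: 1; 1]) = walk_count m 0 0 + walk_count m 0 1.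
Proof.
have Htail a b i : a = b + 2 * i ->
    size (ballots [:: 1; 1] a b (m + 1)) = (b + i + 1 == m + 1) * ((i == 0) + (i == 1)).
  move=> ->; rewrite size_ballots_cons (_ : iota 0 2 = [:: 0; 1]) // !big_cons big_nil.
  by rewrite !size_ballots_last addn0 leq_addr subn0 subnn; case: ifP => H; lia.
rewrite K_ballots rowlen_nseq2_cat (@size_ballots_nseq2_cat _ _ _ _ Htail m 0 0 0 erefl).
by rewrite !add0n eqxx mul1n walk_weightD.
Qed.

Section Numerics.
Local Unset Implicit Arguments.
Local Open Scope Z_scope.

Definition next_row (f : seq Z -> nat -> Z) (v : seq Z) : seq Z := mkseq (f v) (size v).+1.

Lemma nth_next_row f v j : (forall j, (size v < j)%N -> f v j = 0) ->
  nth 0 (next_row f v) j = f v j.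
Proof.
move=> Hf; case: (ltnP j (size v).+1) => Hj; first by rewrite nth_mkseq.
by rewrite nth_default ?size_mkseq // Hf.
Qed.

Definition walk_step (v : seq Z) (h : nat) : Z :=
  (if h is h'.+1 then nth 0 v h' + nth 0 v h else 0) + nth 0 v h.+1.

Definition trinomial_step (v : seq Z) (j : nat) : Z :=
  (if j is j'.+1 then nth 0 v j' else nth 0 v 1) + nth 0 v j + nth 0 v j.+1.

(* [walk_num m h] is [walk_count m 0 h] (see walk_num_count), computed row by
   row so that small values can be evaluated. *)
Definition walk_num (m h : nat) : Z := nth 0 (iter m (next_row walk_step) [:: 1]) h.

(* [trinomial n j] is the coefficient of t^j in (1/t + 1 + t)^n; the rows are
   symmetric, whence the reflected term at j = 0 in [trinomial_step]. *)
Definition trinomial (n j : nat) : Z := nth 0 (iter n (next_row trinomial_step) [:: 1]) j.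

Lemma walk_step_out v j : (size v < j)%N -> walk_step v j = 0.
Proof. by case: j => [|j] // Hj; rewrite /walk_step !nth_default //; lia. Qed.

Lemma trinomial_step_out v j : (size v < j)%N -> trinomial_step v j = 0.
Proof. by case: j => [|j] // Hj; rewrite /trinomial_step !nth_default //; lia. Qed.

Lemma walk_num0S m : walk_num m.+1 0 = walk_num m 1.
Proof. by rewrite /walk_num iterS nth_next_row //; apply: walk_step_out. Qed.

Lemma walk_numSS m h :
  walk_num m.+1 h.+1 = walk_num m h + walk_num m h.+1 + walk_num m h.+2.
Proof. by rewrite /walk_num iterS nth_next_row //; apply: walk_step_out. Qed.

Lemma trinomialS0 n : trinomial n.+1 0 = 2 * trinomial n 1 + trinomial n 0.
Proof.
rewrite /trinomial iterS nth_next_row; last exact: trinomial_step_out.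
by rewrite /trinomial_step; lia.
Qed.

Lemma trinomialSS n j :
  trinomial n.+1 j.+1 = trinomial n j + trinomial n j.+1 + trinomial n j.+2.
Proof. by rewrite /trinomial iterS nth_next_row //; apply: trinomial_step_out. Qed.

Lemma walk_num_count m h : walk_num m h = Z.of_nat (walk_count m 0 h).
Proof.
elim: m h => [|m IH] [|h] //; first by rewrite /walk_num /= nth_nil.
  by rewrite walk_num0S walk_count_last0 IH.
by rewrite walk_numSS walk_count_lastS !IH; lia.
Qed.

(* By the reflection principle, the number of Motzkin paths of length m from
   height 0 to height h. *)
Definition motzkin (m h : nat) : Z := trinomial m h - trinomial m h.+2.

Lemma walk_num_succ_add m h :
  walk_num m.+1 h + walk_num m h = (if h is h'.+1 then motzkin m h' else 0) + motzkin m h.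
Proof.
elim: m h => [|m IH] h.
  by case: h => [|[|[|h]]]; rewrite /walk_num /motzkin /trinomial /= ?nth_nil.
have := IH 0%N; have := IH 1%N; have := IH 2%N.
case: h => [|[|h]]; last move: (IH h.+1) (IH h.+2) (IH h.+3).
all: rewrite /motzkin ?(walk_num0S, walk_numSS) ?(trinomialS0, trinomialSS); lia.
Qed.

Definition kdiff (m : nat) : Z := walk_num m 2 - walk_num m 0 - walk_num m 1.

Definition kdiff_incr (n : nat) : Z := 2 * trinomial n 3 - trinomial n 1 - trinomial n 5.

Lemma kdiff_rec m : kdiff m.+2 = kdiff m + kdiff_incr m.
Proof.
move: (walk_num_succ_add m 0) (walk_num_succ_add m 1) (walk_num_succ_add m 2).
move: (walk_num_succ_add m.+1 0) (walk_num_succ_add m.+1 1) (walk_num_succ_add m.+1 2).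
by rewrite /kdiff /kdiff_incr /motzkin ?(trinomialS0, trinomialSS); lia.
Qed.

Definition trinomial_defect (n j : nat) : Z :=
  (Z.of_nat n + Z.of_nat j + 2) * trinomial n j.+2 + (Z.of_nat j + 1) * trinomial n j.+1
  - (Z.of_nat n - Z.of_nat j) * trinomial n j.

Lemma trinomial_defectS0 n :
  trinomial_defect n.+1 0 = trinomial_defect n 0 + trinomial_defect n 1.
Proof.
by rewrite /trinomial_defect trinomialS0 !trinomialSS !Nat2Z.inj_succ Nat2Z.inj_0 /Z.succ; ring.
Qed.

Lemma trinomial_defectSS n j : trinomial_defect n.+1 j.+1 =
  trinomial_defect n j + trinomial_defect n j.+1 + trinomial_defect n j.+2.
Proof. by rewrite /trinomial_defect !trinomialSS !Nat2Z.inj_succ /Z.succ; ring. Qed.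

Lemma trinomial_defect_eq0 n j : trinomial_defect n j = 0.
Proof.
elim: n j => [|n IH] [|j].
- by [].
- by rewrite /trinomial_defect /trinomial /= !nth_nil; lia.
- by rewrite trinomial_defectS0 !IH.
- by rewrite trinomial_defectSS !IH.
Qed.

Lemma trinomial_ge0 n j : 0 <= trinomial n j.
Proof.
elim: n j => [|n IH] [|j].
- by [].
- by rewrite /trinomial /= nth_nil.
- by rewrite trinomialS0; have := IH 0%N; have := IH 1%N; lia.
- by rewrite trinomialSS; have := IH j; have := IH j.+1; have := IH j.+2; lia.
Qed.

Lemma trinomial0_gt0 n : 0 < trinomial n 0.
Proof. by elim: n => // n IH; rewrite trinomialS0; have := trinomial_ge0 n 1; lia. Qed.

Lemma trinomial1_gt0 n : 0 < trinomial n.+1 1.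
Proof.
rewrite trinomialSS; have := trinomial0_gt0 n.
by have := trinomial_ge0 n 1; have := trinomial_ge0 n 2; lia.
Qed.

Lemma kdiff_incr_identity n :
  (Z.of_nat n + 2) * (Z.of_nat n + 3) * (Z.of_nat n + 4) * (Z.of_nat n + 5) * kdiff_incr n =
  (2 * Z.of_nat n ^ 3 - 30 * Z.of_nat n ^ 2 - 104 * Z.of_nat n) * trinomial n 0
  + (4 * Z.of_nat n ^ 3 - 18 * Z.of_nat n ^ 2 - 118 * Z.of_nat n - 96) * trinomial n 1.
Proof.
set N := Z.of_nat n.
(* The cofactors of the defects eliminate trinomial n 2, ..., trinomial n 5. *)
transitivity ((2 * N ^ 3 - 30 * N ^ 2 - 104 * N) * trinomial n 0
  + (4 * N ^ 3 - 18 * N ^ 2 - 118 * N - 96) * trinomial n 1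
  + (2 * N ^ 2 - 30 * N - 104) * trinomial_defect n 0
  + (N ^ 3 + 19 * N ^ 2 + 74 * N + 80) * trinomial_defect n 1
  + (4 * N ^ 2 + 20 * N + 24) * trinomial_defect n 2
  - (N ^ 3 + 9 * N ^ 2 + 26 * N + 24) * trinomial_defect n 3).
  by rewrite /kdiff_incr /trinomial_defect -/N !Nat2Z.inj_succ Nat2Z.inj_0 /Z.succ; ring.
by rewrite !trinomial_defect_eq0; ring.
Qed.

Lemma kdiff_incr_pos n : (14 <= n)%N -> 0 < kdiff_incr n.
Proof.
move=> Hn; case: (leqP 18 n) => Hn18; last first.
  have /allP Hall : all (fun n => 0 <? kdiff_incr n) (iota 14 4) by vm_compute.
  by apply/Z.ltb_lt/Hall; rewrite mem_iota; lia.
have T0 := trinomial0_gt0 n.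
have T1 : 0 < trinomial n 1 by case: n Hn {Hn18 T0} => [|n] // _; apply: trinomial1_gt0.
have := kdiff_incr_identity n; set N := Z.of_nat n => E.
have HN : 18 <= N by rewrite /N; lia.
have Ha : 0 <= 2 * N ^ 3 - 30 * N ^ 2 - 104 * N.
  have : 0 <= N ^ 2 - 15 * N - 52 by nia.
  nia.
have Hb : 0 < 4 * N ^ 3 - 18 * N ^ 2 - 118 * N - 96 by nia.
have Hpos : 0 < (N + 2) * (N + 3) * (N + 4) * (N + 5) by nia.
by apply/(Z.mul_pos_cancel_l _ _ Hpos); rewrite E; nia.
Qed.

Lemma kdiff_pos m : (14 <= m)%N -> 0 < kdiff m.
Proof.
suff H k : 0 < kdiff (14 + k) /\ 0 < kdiff (15 + k).
  by move=> Hm; rewrite -(subnKC Hm); case: (H (m - 14)%N).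
elim: k => [|k [IH1 IH2]]; first by split; vm_compute.
split=> //; rewrite addnS addSn kdiff_rec.
by have := kdiff_incr_pos (14 + k) (leq_addr _ _); lia.
Qed.

Lemma kdiff_neg m : (0 < m)%N -> (m < 14)%N -> kdiff m < 0.
Proof.
move=> Hm0 Hm14; have /allP Hall : all (fun m => kdiff m <? 0) (iota 1 13) by vm_compute.
by apply/Z.ltb_lt/Hall; rewrite mem_iota; lia.
Qed.

End Numerics.

Lemma K_kdiff m :
  (Z.of_nat (K (nseq m 2 ++ [:: 4])%N) - Z.of_nat (K (nseq m 2 ++ [:: 1; 1])%N))%Z = kdiff m.
Proof. by rewrite K_nseq2_4 K_nseq2_11 /kdiff !walk_num_count; lia. Qed.

Theorem lemma3p4 (m : nat) : 1 <= m ->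
  [/\ K (nseq m 2 ++ [:: 4]) <> K (nseq m 2 ++ [:: 1; 1]),
      m < 14 -> K (nseq m 2 ++ [:: 4]) < K (nseq m 2 ++ [:: 1; 1]) &
      14 <= m -> K (nseq m 2 ++ [:: 4]) > K (nseq m 2 ++ [:: 1; 1])].
Proof.
move=> Hm; have := K_kdiff m.
case: (ltnP m 14) => Hm14.
  by have := kdiff_neg m Hm Hm14; split; lia.
by have := kdiff_pos m Hm14; split; lia.
Qed.
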